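(* Let $D$ be a positive integer and $p$ a prime with $D>p^2$. Let $f$ be a reduced form of discriminant $-4Dp^2$ whose class in $C(-4Dp^2)$ is derived from the class of $e_{-4D}=(1,0,D)$ in $C(-4D)$, and suppose $f$ is not equivalent to $e_{-4Dp^2}=(1,0,Dp^2)$. Then \[ f=(p^2,\;2pk,\;k^2+D) \] for some integer $k$ with $-p/2\le k\le p/2$.
   Context: A binary quadratic form $(a,b,c)$ means $ax^2+bxy+cy^2$ with $a,b,c\in\mathbb Z$, of discriminant $b^2-4ac$; it is primitive if $\gcd(a,b,c)=1$. Two forms are equivalent if one is obtained from the other by a substitution $(x,y)\mapsto(px+qy,\,sx+ty)$ with integer coefficients and $pt-qs=1$. A form $(a,b,c)$ of negative discriminant is reduced if $|b|\le a\le c$, and $b\ge 0$ whenever $|b|=a$ or $a=c$; every positive definite form is equivalent to a unique reduced form. For $\Delta<0$, $C(\Delta)$ is the class group of equivalence classes of primitive positive definite forms of discriminant $\Delta$ under composition. For a positive integer $r$, a class $f\in C(\Delta r^2)$ is derived from a class $g\in C(\Delta)$ if there exist a representative $g_0$ of $g$ and an integer matrix $\begin{pmatrix}\alpha&\beta\\ \gamma&\delta\end{pmatrix}$ of determinant $r$ such that the form $g_0(\alpha x+\beta y,\gamma x+\delta y)$ lies in the class $f$. *)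

From mathcomp Require Import all_boot all_order all_algebra.
Set Implicit Arguments. Unset Strict Implicit. Unset Printing Implicit Defensive.
Import Order.TTheory GRing.Theory Num.Theory.
Local Open Scope ring_scope.

(* A binary quadratic form (a,b,c) : a x^2 + b x y + c y^2. *)
Definition bqf := (int * int * int)%type.

Definition bqf_a (f : bqf) : int := f.1.1.
Definition bqf_b (f : bqf) : int := f.1.2.
Definition bqf_c (f : bqf) : int := f.2.

Definition disc (f : bqf) : int := bqf_b f ^+ 2 - 4 * bqf_a f * bqf_c f.

Definition primitive (f : bqf) : Prop :=
  gcdz (gcdz (bqf_a f) (bqf_b f)) (bqf_c f) = 1.

Definition pos_def (f : bqf) : Prop := disc f < 0 /\ 0 < bqf_a f.

(* The form f(al x + be y, ga x + de y). *)
Definition bqf_subst (f : bqf) (al be ga de : int) : bqf :=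
  let a := bqf_a f in let b := bqf_b f in let c := bqf_c f in
  (a * al ^+ 2 + b * al * ga + c * ga ^+ 2,
   2 * a * al * be + b * (al * de + be * ga) + 2 * c * ga * de,
   a * be ^+ 2 + b * be * de + c * de ^+ 2).

Definition bqf_equiv (f g : bqf) : Prop :=
  exists al be ga de : int, al * de - be * ga = 1 /\ bqf_subst f al be ga de = g.

Definition reduced (f : bqf) : Prop :=
  let a := bqf_a f in let b := bqf_b f in let c := bqf_c f in
  `|b| <= a /\ a <= c /\ ((`|b| = a \/ a = c) -> 0 <= b).

(* The class of f (in C(Delta r^2)) is derived from the class of g (in C(Delta)):
   some representative g0 of g and some integer matrix of determinant r
   transform g0 into a form lying in the class of f. *)
Definition derived_from (r : int) (f g : bqf) : Prop :=
  exists g0 : bqf, bqf_equiv g g0 /\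
  exists al be ga de : int, al * de - be * ga = r /\ bqf_equiv (bqf_subst g0 al be ga de) f.

(* Composing the equivalences in the definition of "derived from" writes f as
   (1,0,D) transformed by a single matrix [[al, be], [ga, de]] of determinant p.
   Evaluating f at (de, -ga) gives the value p^2; if ga were nonzero, the
   minimum property of reduced forms would give p^2 >= al^2 + D ga^2 >= D, which
   is excluded.  Hence ga = 0, al de = p, and up to the sign of the matrix
   al is 1 or p.  Reducedness forces f = (1, 0, D p^2) in the first case and
   f = (p^2, 2 p be, be^2 + D) with |2 be| <= p in the second. *)
From mathcomp Require Import all_boot all_order all_algebra.
From mathcomp Require Import zify ring.
Set Implicit Arguments. Unset Strict Implicit. Unset Printing Implicit Defensive.
Import Order.TTheory GRing.Theory Num.Theory.
Local Open Scope ring_scope.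

Definition bqf_eval (f : bqf) (x y : int) : int :=
  bqf_a f * x ^+ 2 + bqf_b f * x * y + bqf_c f * y ^+ 2.

Lemma bqf_eval_subst (g : bqf) (al be ga de x y : int) :
  bqf_eval (bqf_subst g al be ga de) x y = bqf_eval g (al * x + be * y) (ga * x + de * y).
Proof. by case: g => [[a b] c]; rewrite /bqf_eval /bqf_subst /bqf_a /bqf_b /bqf_c /=; ring. Qed.

Lemma bqf_subst_comp (g : bqf) (a1 b1 c1 d1 a2 b2 c2 d2 : int) :
  bqf_subst (bqf_subst g a1 b1 c1 d1) a2 b2 c2 d2 =
  bqf_subst g (a1 * a2 + b1 * c2) (a1 * b2 + b1 * d2) (c1 * a2 + d1 * c2) (c1 * b2 + d1 * d2).
Proof.
by case: g => [[a b] c]; rewrite /bqf_subst /bqf_a /bqf_b /bqf_c /=; congr (_, _, _); ring.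
Qed.

Lemma bqf_subst_principal_upper (D al be de : int) :
  bqf_subst (1, 0, D) al be 0 de = (al ^+ 2, 2 * al * be, be ^+ 2 + D * de ^+ 2).
Proof. by rewrite /bqf_subst /bqf_a /bqf_b /bqf_c /=; congr (_, _, _); ring. Qed.

Lemma derived_fromE (r : int) (f g : bqf) : derived_from r f g ->
  exists al be ga de : int, al * de - be * ga = r /\ f = bqf_subst g al be ga de.
Proof.
case=> _ [[a1 [b1 [c1 [d1 [det1 <-]]]]]].
case=> a2 [b2 [c2 [d2 [det2 [a3 [b3 [c3 [d3 [det3 <-]]]]]]]]].
rewrite !bqf_subst_comp; eexists _, _, _, _; split; last by [].
rewrite -[r]mul1r -[r]mulr1 -{1}det1 -det2 -det3; ring.
Qed.

Lemma reduced_eval_ge (f : bqf) (x y : int) :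
  reduced f -> y != 0 -> bqf_a f <= bqf_eval f x y.
Proof.
case: f => [[a b] c]; rewrite /reduced /bqf_eval /bqf_a /bqf_b /bqf_c /= => -[hb [hc _]] y0.
have a0 : 0 <= a by apply: le_trans hb.
have bxy : - (a * `|x * y|) <= b * x * y.
  have /andP[+ _] : - (a * `|x * y|) <= b * (x * y) <= a * `|x * y|.
    by rewrite -ler_norml normrM ler_wpM2r.
  by rewrite mulrA.
have cy : a * y ^+ 2 <= c * y ^+ 2 by rewrite ler_wpM2r ?sqr_ge0.
(* with y <> 0, x^2 - |x y| + y^2 = (|x| - |y|)^2 + |x| |y| is a positive integer *)
have pos : 1 <= x ^+ 2 - `|x * y| + y ^+ 2.
  rewrite normrM -(real_normK (num_real x)) -(real_normK (num_real y)).
  have := normr_ge0 x; have : 0 < `|y| by rewrite normr_gt0.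
  case: (lerP `|x| `|y|); nia.
nia.
Qed.

Lemma reduced_principal_subst_upper_triangular (D r al be ga de : int) :
  r ^+ 2 < D -> al * de - be * ga = r ->
  reduced (bqf_subst (1, 0, D) al be ga de) -> ga = 0.
Proof.
move=> rD det red; apply/eqP; apply: contraLR rD => ga0; rewrite -leNgt.
have := reduced_eval_ge de red (y := - ga); rewrite oppr_eq0 => /(_ ga0).
rewrite bqf_eval_subst /bqf_eval /bqf_a /bqf_b /bqf_c /= !mul1r !mul0r !addr0.
have -> : al * de + be * - ga = r by rewrite -det; ring.
have -> : ga * de + de * - ga = 0 by ring.
rewrite expr0n mulr0 addr0.
have : 1 <= ga ^+ 2 by rewrite -(real_normK (num_real ga)); move: ga0; rewrite -normr_gt0; nia.
nia.
Qed.

Lemma reduced_derived_principal (D r : int) (f : bqf) :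
  0 < r -> r ^+ 2 < D -> reduced f -> derived_from r f (1, 0, D) ->
  exists al be de : int, 0 < al /\ al * de = r /\
    f = (al ^+ 2, 2 * al * be, be ^+ 2 + D * de ^+ 2).
Proof.
move=> r0 rD red /derived_fromE [al [be [ga [de [det ef]]]]]; subst f.
have ga0 := reduced_principal_subst_upper_triangular rD det red.
move: det; rewrite ga0 mulr0 subr0 bqf_subst_principal_upper => det.
have al0 : al != 0 by apply: contraTneq r0 => al0; rewrite -det al0 mul0r.
have [al_gt0 | al_le0] := ltP 0 al; first by exists al, be, de.
exists (- al), (- be), (- de); split; first by lia.
by rewrite mulrNN; split; last by congr (_, _, _); ring.
Qed.

Lemma prime_pos_divisor (p : nat) (a d : int) : prime p -> 0 < a -> a * d = p%:Z ->
  (a = 1 /\ d = p%:Z) \/ (a = p%:Z /\ d = 1).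
Proof.
move=> pr; have p0 := prime_gt0 pr.
case: a => [n|//] n0; case: d => [m ad|m ad]; last by exfalso; move: ad; rewrite NegzE; nia.
have nm : (n * m)%N = p by lia.
have [n1 | n1] := eqVneq n 1%N; first by left; split; lia.
have np : n = p by apply: (prime_nt_dvdP pr n1); apply/dvdnP; exists m; lia.
by right; split; nia.
Qed.

Theorem proposition3p1 (D p : nat) (f : bqf) :
  (0 < D)%N -> prime p -> (p ^ 2 < D)%N ->
  reduced f -> pos_def f -> primitive f ->
  disc f = - 4 * (D%:Z) * (p%:Z) ^+ 2 ->
  derived_from (p%:Z) f (1, 0, D%:Z) ->
  ~ bqf_equiv f (1, 0, D%:Z * (p%:Z) ^+ 2) ->
  exists k : int, - (p%:Z) <= 2 * k /\ 2 * k <= p%:Z /\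
    f = ((p%:Z) ^+ 2, 2 * (p%:Z) * k, k ^+ 2 + D%:Z).
Proof.
move=> _ pr pD red _ _ _ der not_principal.
have p0 : 0 < p%:Z by rewrite ltz_nat prime_gt0.
have p2D : p%:Z ^+ 2 < D%:Z by move: pD; rewrite -ltz_nat; lia.
have [al [be [de [al0 [det ef]]]]] := reduced_derived_principal p0 p2D red der; subst f.
move: red => [+ _]; rewrite /bqf_a /bqf_b /= !normrM => hb.
have [[al1 dep] | [alp de1]] := prime_pos_divisor pr al0 det; subst al de.
  have be0 : be = 0 by move: hb; rewrite normr1 expr1n; lia.
  case: not_principal; exists 1, 0, 0, 1; split; first by [].
  by rewrite be0 /bqf_subst /bqf_a /bqf_b /bqf_c /=; congr (_, _, _); ring.
have hbe : 2 * `|be| <= p by move: hb; rewrite (gtr0_norm p0); nia.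
by exists be; split; last split; [lia | lia | congr (_, _, _); ring].
Qed.
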